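(* Let $G$ be a group and $A=\bigoplus_{g\in G}A_g$ a $G$-graded associative unital $k$-algebra (so $A_gA_h\subseteq A_{gh}$). For $g\in G$ let $\pi_g:A\to A_g$ be the projection onto the $g$-component, and let $B$ be the subalgebra of $\mathrm{End}_k(A)$ generated by $L(A)\cup\{\pi_g: g\in G\}$. Then $A$ is a critically compressible left $B$-module if and only if $A_e$ ($e$ the neutral element of $G$) is a left Ore domain and $A_e$ is large in $A$.
   Context: $L(A)=\{L_a:a\in A\}$, $L_a(x)=ax$; $A$ is a left $B$-module via $\varphi\cdot a=\varphi(a)$, whose submodules are the graded left ideals of $A$; $\mathrm{End}_B(A)\cong A_e$. $A_e$ is large in $A$ if $A_e\cap I\neq0$ for every nonzero graded left ideal $I$ of $A$. A left Ore domain is a domain $S$ with $Sa\cap Sb\neq0$ for nonzero $a,b$. A nonzero module is critically compressible if it embeds into each of its nonzero submodules and into none of its factor modules $M/N$ with $N\neq0$. *)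

From HB Require Import structures.
From mathcomp Require Import all_boot all_order all_algebra.
Set Implicit Arguments. Unset Strict Implicit. Unset Printing Implicit Defensive.
Import GRing.Theory.
Local Open Scope ring_scope.

(* The G-grading A = (+)_{g in G} A_g is given by the family of
   projections pi g : A -> A_g ⊆ A; the homogeneous component A_g is
   {x | pi g x = x}. *)

Definition homog (k : fieldType) (A : algType k) (G : groupType)
  (pi : G -> A -> A) (g : G) (x : A) : Prop := pi g x = x.

Definition grading (k : fieldType) (A : algType k) (G : groupType)
  (pi : G -> A -> A) : Prop :=
  [/\ (forall g (c : k) (x y : A), pi g (c *: x + y) = c *: pi g x + pi g y),
      (forall g x, pi g (pi g x) = pi g x),
      (forall g h x, g <> h -> pi g (pi h x) = 0),
      (forall x : A, exists s : seq G,
          x = \sum_(g <- s) pi g x /\ (forall g, g \notin s -> pi g x = 0)) &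
      (forall g h (x y : A), homog pi g x -> homog pi h y ->
          homog pi (g * h)%g (x * y))].

Definition Lmul (k : fieldType) (A : algType k) (a : A) : A -> A :=
  fun x => a * x.

(* B = the k-subalgebra of End_k(A) generated by L(A) ∪ {pi g | g in G}:
   the smallest set of maps A -> A containing these generators and closed
   under sums, k-scalar multiples and composition (the unit id = L_1 is
   among the generators). *)
Inductive inB (k : fieldType) (A : algType k) (G : groupType)
  (pi : G -> A -> A) : (A -> A) -> Prop :=
| inB_L (a : A) : inB pi (Lmul a)
| inB_pi (g : G) : inB pi (pi g)
| inB_add (f h : A -> A) : inB pi f -> inB pi h -> inB pi (fun x => f x + h x)
| inB_scale (c : k) (f : A -> A) : inB pi f -> inB pi (fun x => c *: f x)
| inB_comp (f h : A -> A) : inB pi f -> inB pi h -> inB pi (fun x => f (h x)).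

Definition Bsubmod (k : fieldType) (A : algType k) (G : groupType)
  (pi : G -> A -> A) (N : A -> Prop) : Prop :=
  [/\ N 0,
      (forall x y, N x -> N y -> N (x - y)) &
      (forall b x, inB pi b -> N x -> N (b x))].

Definition nonzero_sub (A : zmodType) (N : A -> Prop) : Prop :=
  exists x, N x /\ x <> 0.

Definition Bhom (k : fieldType) (A : algType k) (G : groupType)
  (pi : G -> A -> A) (f : A -> A) : Prop :=
  (forall x y, f (x + y) = f x + f y) /\
  (forall b x, inB pi b -> f (b x) = b (f x)).

Definition embeds_into_sub (k : fieldType) (A : algType k) (G : groupType)
  (pi : G -> A -> A) (N : A -> Prop) : Prop :=
  exists f : A -> A, Bhom pi f /\ injective f /\ (forall x, N (f x)).

(* A map A -> A/N is
   represented by a set-theoretic lift f : A -> A (any map to A/N has one);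
   it is a B-homomorphism iff it is one modulo N, and it is injective iff
   f x ∈ N implies x = 0. *)
Definition embeds_into_quot (k : fieldType) (A : algType k) (G : groupType)
  (pi : G -> A -> A) (N : A -> Prop) : Prop :=
  exists f : A -> A,
    (forall x y, N (f (x + y) - (f x + f y))) /\
    (forall b x, inB pi b -> N (f (b x) - b (f x))) /\
    (forall x, N (f x) -> x = 0).

Definition critically_compressible (k : fieldType) (A : algType k)
  (G : groupType) (pi : G -> A -> A) : Prop :=
  [/\ exists x : A, x <> 0,
      (forall N, Bsubmod pi N -> nonzero_sub N -> embeds_into_sub pi N) &
      (forall N, Bsubmod pi N -> nonzero_sub N -> ~ embeds_into_quot pi N)].

Definition graded_left_ideal (k : fieldType) (A : algType k) (G : groupType)
  (pi : G -> A -> A) (I : A -> Prop) : Prop :=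
  [/\ I 0,
      (forall x y, I x -> I y -> I (x - y)),
      (forall a x, I x -> I (a * x)) &
      (forall g x, I x -> I (pi g x))].

Definition Ae_left_Ore_domain (k : fieldType) (A : algType k) (G : groupType)
  (pi : G -> A -> A) : Prop :=
  [/\ (1 : A) <> 0,
      (forall x y, homog pi 1%g x -> homog pi 1%g y -> x * y = 0 ->
          x = 0 \/ y = 0) &
      (forall a b, homog pi 1%g a -> homog pi 1%g b -> a <> 0 -> b <> 0 ->
          exists s t, homog pi 1%g s /\ homog pi 1%g t /\
                      s * a = t * b /\ s * a <> 0)].

Definition Ae_large (k : fieldType) (A : algType k) (G : groupType)
  (pi : G -> A -> A) : Prop :=
  forall I, graded_left_ideal pi I -> nonzero_sub I ->
    exists x, homog pi 1%g x /\ I x /\ x <> 0.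

(* The B-submodules of A are its graded left ideals, and a B-endomorphism of A,
   commuting with every [L_a] and every [pi g], is right multiplication by the
   element [f 1] of A_e.  So an embedding of A into a nonzero submodule [N] is a
   right-regular element of A_e lying in [N], and right multiplication by [a] in
   A_e embeds A into A/N as soon as [x a] lies in [N] only for [x = 0].
   Critical compressibility then gives largeness directly, regularity of a
   nonzero [y] in A_e by comparing [A y] with the left annihilator of [y], and
   the Ore condition by comparing [A a] with [A b].  Conversely, if A_e is a
   large left Ore domain, a map A -> A/N is modulo [N] right multiplication by
   some [v] in A_e, and a common left multiple of [v] and a nonzero element of
   [N] in A_e shows that it is not injective. *)

From mathcomp Require Import all_boot all_order all_algebra.
From Stdlib Require Import Classical.
Set Implicit Arguments. Unset Strict Implicit. Unset Printing Implicit Defensive.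
Import GRing.Theory.
Local Open Scope ring_scope.

Definition lprincipal (R : pzRingType) (y : R) : R -> Prop :=
  fun w => exists a, w = a * y.

Definition lann (R : pzRingType) (y : R) : R -> Prop := fun w => w * y = 0.

Section GradedAlgebra.
Variables (k : fieldType) (A : algType k) (G : groupType) (pi : G -> A -> A).
Hypothesis hgr : grading pi.

Lemma piD g x y : pi g (x + y) = pi g x + pi g y.
Proof. by case: hgr => lin _ _ _ _; have := lin g 1 x y; rewrite !scale1r. Qed.

Lemma pi0 g : pi g 0 = 0.
Proof. by apply: (@addrI _ (pi g 0)); rewrite -piD !addr0. Qed.

Lemma piZ g c x : pi g (c *: x) = c *: pi g x.
Proof. by case: hgr => lin _ _ _ _; rewrite -[c *: x]addr0 lin pi0 addr0. Qed.

Lemma piB g x y : pi g (x - y) = pi g x - pi g y.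
Proof. by rewrite piD -scaleN1r piZ scaleN1r. Qed.

Lemma pi_idem g x : pi g (pi g x) = pi g x.
Proof. by case: hgr. Qed.

Lemma pi_orth g h x : g <> h -> pi g (pi h x) = 0.
Proof. by case: hgr => _ _ orth _ _; apply: orth. Qed.

Lemma homog_pi g x : homog pi g (pi g x).
Proof. exact: pi_idem. Qed.

Lemma homogM g h x y :
  homog pi g x -> homog pi h y -> homog pi (g * h)%g (x * y).
Proof. by case: hgr => _ _ _ _ mul; apply: mul. Qed.

Lemma pi_homog_neq g h x : homog pi g x -> h <> g -> pi h x = 0.
Proof. by rewrite /homog => <- /pi_orth. Qed.

Lemma graded_ind (P : A -> Prop) x :
  P 0 -> (forall y z, P y -> P z -> P (y + z)) -> (forall g, P (pi g x)) -> P x.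
Proof.
move=> P0 PD Ppi; case: hgr => _ _ _ decomp _; have [s [-> _]] := decomp x.
by elim: s => [|g s IH]; rewrite ?big_nil ?big_cons //; apply: PD.
Qed.

Lemma graded_eq x y : (forall g, pi g x = pi g y) -> x = y.
Proof.
move=> eq_pi; apply/eqP; rewrite -subr_eq0; apply/eqP.
apply: (@graded_ind (eq^~ 0)) => [//|? ? -> ->|g]; first by rewrite addr0.
by rewrite piB eq_pi subrr.
Qed.

Lemma homogP g x : homog pi g x <-> forall h, h <> g -> pi h x = 0.
Proof.
split=> [hx h /(pi_homog_neq hx)//|pi_x]; apply: graded_eq => h.
by case: (eqVneq h g) => [->|/eqP hg]; rewrite ?pi_idem // pi_orth ?pi_x.
Qed.

(* Split [x] as its component of degree [h g^-1] plus a rest, which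
   contributes nothing in degree [h]. *)
Lemma pi_mulr_homog x y g h :
  homog pi g y -> pi h (x * y) = pi (h * g^-1)%g x * y.
Proof.
move=> hy; set f := (h * g^-1)%g.
have hfy : homog pi h (pi f x * y).
  by rewrite -[h](mulgVK g) -/f; apply: homogM (homog_pi f x) hy.
rewrite -{1}[x](subrK (pi f x)) mulrDl piD hfy -[RHS]add0r; congr (_ + _).
apply: (@graded_ind (fun z => pi h (z * y) = 0)) => [||g'].
- by rewrite mul0r pi0.
- by move=> z z' hz hz'; rewrite mulrDl piD hz hz' addr0.
case: (eqVneq g' f) => [->|/eqP g'f]; first by rewrite piB pi_idem subrr mul0r pi0.
apply: (pi_homog_neq (homogM (homog_pi g' _) hy)) => hg'.
by apply: g'f; rewrite /f hg' mulgK.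
Qed.

Lemma pi_mulr1 x u g : homog pi 1%g u -> pi g (x * u) = pi g x * u.
Proof. by move=> hu; rewrite (pi_mulr_homog _ _ hu) invg1 mulg1. Qed.

Lemma homog1 : homog pi 1%g 1.
Proof.
set e := pi 1%g 1.
have e_mull x : e * x = x.
  apply: (@graded_ind (fun y => e * y = y)) => [|y z hy hz|g].
  - by rewrite mulr0.
  - by rewrite mulrDr hy hz.
  by have := pi_mulr_homog 1 g (homog_pi g x); rewrite mul1r mulgV pi_idem.
by rewrite /homog -/e -[e]mulr1 e_mull.
Qed.

Lemma BsubmodP N : Bsubmod pi N <-> graded_left_ideal pi N.
Proof.
split=> [[N0 NB Nact]|[N0 NB Nmul Npi]].
  by split=> // [a|g] x Nx; apply: Nact Nx; constructor.
split=> // b x Bb.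
elim: Bb x => {b} [a|g|f h _ IHf _ IHh|c f _ IHf|f h _ IHf _ IHh] x Nx.
- exact: Nmul.
- exact: Npi.
- rewrite -[h x]opprK; apply: (NB) (IHf _ Nx) _.
  by rewrite -sub0r; apply: NB N0 (IHh _ Nx).
- by rewrite -[f x]mul1r scalerAl; apply: Nmul; apply: IHf.
- by apply: IHf; apply: IHh.
Qed.

Lemma graded_left_idealD N x y : graded_left_ideal pi N -> N x -> N y -> N (x + y).
Proof.
case=> N0 NB _ _ Nx Ny; rewrite -[y]opprK.
by apply: (NB) Nx _; rewrite -sub0r; apply: NB.
Qed.

Lemma graded_left_ideal_of_pi N x :
  graded_left_ideal pi N -> (forall g, N (pi g x)) -> N x.
Proof.
move=> NI; apply: (graded_ind (P := N)); first by case: NI.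
by move=> y z; apply: graded_left_idealD.
Qed.

Lemma graded_left_idealI N M :
  graded_left_ideal pi N -> graded_left_ideal pi M ->
  graded_left_ideal pi (fun x => N x /\ M x).
Proof.
case=> N0 NB Nmul Npi [M0 MB Mmul Mpi]; split=> //.
- by move=> x y [Nx Mx] [Ny My]; split; [apply: NB|apply: MB].
- by move=> a x [Nx Mx]; split; [apply: Nmul|apply: Mmul].
- by move=> g x [Nx Mx]; split; [apply: Npi|apply: Mpi].
Qed.

Lemma graded_left_ideal_lprincipal y :
  homog pi 1%g y -> graded_left_ideal pi (lprincipal y).
Proof.
move=> hy; split.
- by exists 0; rewrite mul0r.
- by move=> _ _ [a ->] [b ->]; exists (a - b); rewrite mulrBl.
- by move=> c _ [a ->]; exists (c * a); rewrite mulrA.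
- by move=> g _ [a ->]; exists (pi g a); rewrite pi_mulr1.
Qed.

Lemma graded_left_ideal_lann y : homog pi 1%g y -> graded_left_ideal pi (lann y).
Proof.
rewrite /lann => hy; split.
- by rewrite mul0r.
- by move=> a b ha hb; rewrite mulrBl ha hb subrr.
- by move=> c a ha; rewrite -mulrA ha mulr0.
- by move=> g a ha; rewrite -pi_mulr1 // ha pi0.
Qed.

Lemma nonzero_lprincipal (y : A) : y <> 0 -> nonzero_sub (lprincipal y).
Proof. by exists y; split=> //; exists 1; rewrite mul1r. Qed.

Lemma inB_mulr u b x : homog pi 1%g u -> inB pi b -> b x * u = b (x * u).
Proof.
move=> hu Bb; elim: Bb x => {b} [a|g|f h _ IHf _ IHh|c f _ IHf|f h _ IHf _ IHh] x.
- by rewrite /Lmul mulrA.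
- by rewrite pi_mulr1.
- by rewrite mulrDl IHf IHh.
- by rewrite -scalerAl IHf.
- by rewrite IHf IHh.
Qed.

Lemma Bhom_mulr u : homog pi 1%g u -> Bhom pi (fun x => x * u).
Proof. by move=> hu; split=> [x y|b x Bb]; [exact: mulrDl|exact: inB_mulr]. Qed.

Lemma BhomE f x : Bhom pi f -> f x = x * f 1.
Proof. by case=> _ fB; rewrite -{1}[x]mulr1; apply: (fB (Lmul x)); constructor. Qed.

Lemma Bhom_homog1 f : Bhom pi f -> homog pi 1%g (f 1).
Proof.
move=> fB; apply/homogP => g g1; case: (fB) => _ fB'.
rewrite -fB'; last by constructor.
by rewrite (pi_homog_neq homog1 g1) (BhomE 0 fB) mul0r.
Qed.

Lemma embeds_into_sub_rreg N :
  embeds_into_sub pi N -> exists u, [/\ homog pi 1%g u, N u & GRing.rreg u].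
Proof.
case=> f [fB [f_inj Nf]]; exists (f 1); split=> //; first exact: Bhom_homog1.
by move=> x y /= eq_xy; apply: f_inj; rewrite (BhomE x fB) (BhomE y fB).
Qed.

Lemma embeds_into_quot_mulr N a : Bsubmod pi N -> homog pi 1%g a ->
  (forall x, N (x * a) -> x = 0) -> embeds_into_quot pi N.
Proof.
case=> N0 _ _ ha a_inj; exists (fun x => x * a).
split=> [x y|]; first by rewrite mulrDl subrr.
by split=> // b x Bb; rewrite inB_mulr ?subrr.
Qed.

Lemma large_common_multiple a b :
  Ae_large pi -> homog pi 1%g a -> homog pi 1%g b ->
  (exists w, [/\ lprincipal a w, lprincipal b w & w <> 0]) ->
  exists s t, [/\ homog pi 1%g s, homog pi 1%g t, s * a = t * b & s * a <> 0].
Proof.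
move=> large ha hb [w [Aw Bw w0]].
have AB := graded_left_idealI (graded_left_ideal_lprincipal ha)
                               (graded_left_ideal_lprincipal hb).
have [x [hx [[[p xp] [q xq]] x0]]] :=
  large _ AB (ex_intro _ w (conj (conj Aw Bw) w0)).
have xpa : x = pi 1%g p * a by rewrite -hx xp pi_mulr1.
have xqb : x = pi 1%g q * b by rewrite -hx xq pi_mulr1.
by exists (pi 1%g p), (pi 1%g q); rewrite -xpa -xqb; split=> //; apply: homog_pi.
Qed.

(* The off-degree components of [f 1] lie in [N] because [f (pi g 1) = f 0]
   for [g != 1]. *)
Lemma quot_hom_mulr N f : Bsubmod pi N ->
  (forall x y, N (f (x + y) - (f x + f y))) ->
  (forall b x, inB pi b -> N (f (b x) - b (f x))) ->
  exists v, homog pi 1%g v /\ forall z, N (f z - z * v).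
Proof.
move=> /BsubmodP NI fD fB; case: (NI) => N0 NB Nmul _.
have Nf0 : N (f 0).
  move: (fD 0 0); rewrite addr0 opprD addrA subrr sub0r => /(NB _ _ N0).
  by rewrite sub0r opprK.
have Nf1 : N (f 1 - pi 1%g (f 1)).
  apply: graded_left_ideal_of_pi NI _ => g; rewrite piB.
  have [->|/eqP g1] := eqVneq g 1%g.
    by rewrite pi_idem subrr.
  rewrite (pi_orth _ g1) subr0.
  have := fB (pi g) 1 (inB_pi pi g).
  rewrite (pi_homog_neq homog1 g1) => /(NB _ _ Nf0).
  by rewrite opprB addrC subrK.
exists (pi 1%g (f 1)); split=> [|z]; first exact: homog_pi.
rewrite -[f z](subrK (z * f 1)) -addrA -mulrBr.
apply: graded_left_idealD NI _ (Nmul _ _ Nf1).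
by have := fB (Lmul z) 1 (inB_L pi z); rewrite /Lmul mulr1.
Qed.

Section CriticallyCompressible.
Hypothesis hcc : critically_compressible pi.

Lemma cc_exists_mulr_in N a : Bsubmod pi N -> nonzero_sub N ->
  homog pi 1%g a -> exists x, x <> 0 /\ N (x * a).
Proof.
move=> NB NN ha; apply: NNPP => no_x; case: hcc => _ _ /(_ N NB NN); apply.
apply: (embeds_into_quot_mulr NB ha) => x Nxa; apply: NNPP => x0.
by apply: no_x; exists x.
Qed.

Lemma cc_sub_rreg N : Bsubmod pi N -> nonzero_sub N ->
  exists u, [/\ homog pi 1%g u, N u, u <> 0 & GRing.rreg u].
Proof.
case: hcc => _ cc_sub _ NB NN.
have [u [hu Nu u_reg]] := embeds_into_sub_rreg (cc_sub N NB NN).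
by exists u; split=> //; apply/eqP/rreg_neq0.
Qed.

(* [A y] contains a regular [u = a y] with [a] in A_e; a nonzero [x] with
   [x a] in the left annihilator of [y] would kill [u]. *)
Lemma cc_rreg y : homog pi 1%g y -> y <> 0 -> GRing.rreg y.
Proof.
move=> hy y0; apply: mulIr0_rreg => z zy; have [//|/eqP z0] := eqVneq z 0.
have /BsubmodP Ay := graded_left_ideal_lprincipal hy.
have [u [hu [a ua] _ u_reg]] := cc_sub_rreg Ay (nonzero_lprincipal y0).
have {}ua : u = pi 1%g a * y by rewrite -hu ua pi_mulr1.
have /BsubmodP ann_y := graded_left_ideal_lann hy.
have [x [x0 xay]] :=
  cc_exists_mulr_in ann_y (ex_intro _ z (conj zy z0)) (homog_pi 1%g a).
by case: x0; apply: u_reg; rewrite /= ua mul0r mulrA; exact: xay.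
Qed.

Lemma cc_large : Ae_large pi.
Proof.
move=> I /BsubmodP IB NI; have [u [hu Iu u0 _]] := cc_sub_rreg IB NI.
by exists u.
Qed.

Lemma cc_Ore a b : homog pi 1%g a -> homog pi 1%g b -> a <> 0 -> b <> 0 ->
  exists s t, [/\ homog pi 1%g s, homog pi 1%g t, s * a = t * b & s * a <> 0].
Proof.
move=> ha hb a0 b0; apply: (large_common_multiple cc_large ha hb).
have /BsubmodP Ab := graded_left_ideal_lprincipal hb.
have [x [x0 xab]] := cc_exists_mulr_in Ab (nonzero_lprincipal b0) ha.
exists (x * a); split=> //; first by exists x.
by apply/eqP; rewrite (mulIr_eq0 _ (cc_rreg ha a0)); apply/eqP.
Qed.

Lemma cc_Ae_left_Ore_domain : Ae_left_Ore_domain pi.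
Proof.
split; [exact/eqP/oner_neq0| |move=> a b ha hb a0 b0].
  move=> x y _ hy xy; have [|/eqP y0] := eqVneq y 0; first by right.
  by left; apply: (cc_rreg hy y0); rewrite /= xy mul0r.
by have [s [t [? ? ? ?]]] := cc_Ore ha hb a0 b0; exists s, t.
Qed.

End CriticallyCompressible.

Section LargeOreDomain.
Hypotheses (hOre : Ae_left_Ore_domain pi) (hlarge : Ae_large pi).

Lemma Ae_rreg u : homog pi 1%g u -> u <> 0 -> GRing.rreg u.
Proof.
move=> hu u0; apply: mulIr0_rreg => z zu; have [//|/eqP z0] := eqVneq z 0.
have [x [hx [xu x0]]] :=
  hlarge (graded_left_ideal_lann hu) (ex_intro _ z (conj zu z0)).
by case: hOre => _ dom _; case: (dom x u hx hu xu).
Qed.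

Lemma large_embeds_into_sub N :
  Bsubmod pi N -> nonzero_sub N -> embeds_into_sub pi N.
Proof.
move=> /BsubmodP NI NN; have [u [hu [Nu u0]]] := hlarge NI NN.
exists (fun x => x * u); split; first exact: Bhom_mulr.
by split=> [|x]; [exact: Ae_rreg|case: NI => _ _ Nmul _; exact: Nmul].
Qed.

(* Ore gives [s v = t u != 0] with [u] in [N], so [f s] lies in [N] although
   [s != 0]. *)
Lemma large_not_embeds_into_quot N :
  Bsubmod pi N -> nonzero_sub N -> ~ embeds_into_quot pi N.
Proof.
move=> NB NN [f [fD [fB f_inj]]]; have /BsubmodP NI := NB.
have [v [hv Nfv]] := quot_hom_mulr NB fD fB.
have [u [hu [Nu u0]]] := hlarge NI NN.
have [v0|/eqP v0] := eqVneq v 0.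
  have Nf1 : N (f 1) by have := Nfv 1; rewrite v0 mulr0 subr0.
  by have /eqP := f_inj 1 Nf1; rewrite oner_eq0.
case: hOre => _ _ /(_ v u hv hu v0 u0) [s [t [_ [_ [svtu sv0]]]]].
apply: sv0; suff -> : s = 0 by rewrite mul0r.
apply: f_inj; rewrite -[f s](subrK (s * v)) {2}svtu.
by case: (NI) => _ _ Nmul _; apply: graded_left_idealD NI (Nfv s) (Nmul t u Nu).
Qed.

End LargeOreDomain.
End GradedAlgebra.

Theorem proposition3p7 (k : fieldType) (A : algType k) (G : groupType)
  (pi : G -> A -> A) (hgr : grading pi) :
  critically_compressible pi <-> (Ae_left_Ore_domain pi /\ Ae_large pi).
Proof.
split=> [hcc|[hOre hlarge]].
  by split; [exact: cc_Ae_left_Ore_domain|exact: cc_large].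
split; first by exists 1; apply/eqP/oner_neq0.
- exact: large_embeds_into_sub.
- exact: large_not_embeds_into_quot.
Qed.
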